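(* For every $t\in(0,1)$ and every nonnegative integer $n$, $$\sum_{k\ge0} B^{n-k}_k(t) = \frac{1-(-t)^{n+1}}{1+t}.$$
   Context: The Bernstein polynomials are $B^m_k(t) = \binom{m}{k} t^k (1-t)^{m-k}$ for integers $0\le k\le m$, and $B^m_k(t)=0$ for $m<k$. *)

From mathcomp Require Import all_boot all_order all_algebra.
Set Implicit Arguments. Unset Strict Implicit. Unset Printing Implicit Defensive.
Import Order.TTheory GRing.Theory Num.Theory.
Local Open Scope ring_scope.

Definition bernstein {R : ringType} (m k : nat) (t : R) : R :=
  if (k <= m)%N then ('C(m, k))%:R * t ^+ k * (1 - t) ^+ (m - k) else 0.

From mathcomp Require Import all_boot all_order all_algebra.
From mathcomp Require Import ring.
Import Order.TTheory GRing.Theory Num.Theory.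
Local Open Scope ring_scope.

(* Write S_n for the diagonal sum.  Pascal's rule for Bernstein polynomials gives
   S_(n+2) = (1 - t) S_(n+1) + t S_n, whose characteristic roots are 1 and -t;
   equivalently S_(n+1) + t S_n is constant, equal to S_1 + t S_0 = 1.  Hence
   S_(n+1) = 1 - t S_n, and S_n (1 + t) = 1 - (-t)^(n+1) follows by induction.
   The identity holds for every t with 1 + t invertible. *)

Section DiagonalBernsteinSum.
Variables (R : comNzRingType) (t : R).

Lemma bernsteinSS m k :
  bernstein m.+1 k.+1 t = (1 - t) * bernstein m k.+1 t + t * bernstein m k t.
Proof.
rewrite /bernstein ltnS.
have [lt_km | _ | ->] := ssrnat.ltngtP k m.
- rewrite binS natrD subSS -(subnSK lt_km) !exprS; ring.
- by rewrite !mulr0 addr0.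
- by rewrite !subnn !binn exprS; ring.
Qed.

Lemma bernsteinS0 m : bernstein m.+1 0 t = (1 - t) * bernstein m 0 t.
Proof. by rewrite /bernstein /= !bin0 !subn0 exprS mulrCA. Qed.

Definition diag_bernstein_sum n := \sum_(0 <= k < n.+1) bernstein (n - k) k t.

Local Notation S := diag_bernstein_sum.

Lemma diag_bernstein_sumSS n : S n.+2 = (1 - t) * S n.+1 + t * S n.
Proof.
rewrite /S big_nat_recl // big_nat_recr //= subnn subn0 bernsteinS0.
rewrite [in RHS]big_nat_recl //= subn0.
have pascal k : (0 <= k < n.+1)%N -> bernstein (n.+2 - k.+1) k.+1 t
    = (1 - t) * bernstein (n.+1 - k.+1) k.+1 t + t * bernstein (n - k) k t.
  by move=> lt_kn; rewrite !subSS subSn // bernsteinSS.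
rewrite (eq_big_nat _ _ pascal) big_split /= -!mulr_sumr /bernstein /=; ring.
Qed.

Lemma diag_bernstein_sumS n : S n.+1 = 1 - t * S n.
Proof.
elim: n => [|n IHn].
  by rewrite /S !big_nat_recr //= !big_geq // /bernstein /= !bin0; ring.
by rewrite diag_bernstein_sumSS IHn; ring.
Qed.

Lemma diag_bernstein_sum_closed n : S n * (1 + t) = 1 - (- t) ^+ n.+1.
Proof.
elim: n => [|n IHn].
  by rewrite /S big_nat1 /bernstein /= bin0; ring.
by rewrite diag_bernstein_sumS mulrBl -mulrA IHn [in RHS]exprS; ring.
Qed.

End DiagonalBernsteinSum.

Theorem mainTheorem18 (R : realFieldType) (t : R) (n : nat) :
  0 < t -> t < 1 ->
  \sum_(0 <= k < n.+1) bernstein (n - k) k t = (1 - (- t) ^+ n.+1) / (1 + t).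
Proof.
move=> t_gt0 _.
have tD1_neq0 : 1 + t != 0 by rewrite gt_eqF // ltr_wpDl.
by rewrite -diag_bernstein_sum_closed mulfK.
Qed.
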